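(* In the first-best problem, denote by $x$ the Agent's reservation value, and let $\lambda_{Lag}(x)$ be the Lagrange multiplier, solution of $G(\lambda_{Lag})=x$ where $$G(\lambda_{Lag})=\int_0^\infty e^{-\lambda s}\left(U\Big((U')^{-1}\big(\tfrac{1}{\lambda_{Lag}}e^{(\lambda-\delta)s}\big)\Big)-h\Big(\big(\tfrac{h'}{\varphi'}\big)^{-1}\big(\tfrac{1}{\lambda_{Lag}}e^{(\lambda-\delta)s}\big)\vee 0\Big)\right)ds,$$ and set $R_t^*(x)=(U')^{-1}\big(\tfrac{1}{\lambda_{Lag}(x)}e^{(\lambda-\delta)t}\big)$, $A_t^*(x)=(\tfrac{h'}{\varphi'})^{-1}\big(\tfrac{1}{\lambda_{Lag}(x)}e^{(\lambda-\delta)t}\big)\vee0$ and $H_t(x)=\varphi(A^*_t(x))-R^*_t(x)$. In the non-degenerate case $\tau^*\neq0$ (the optimal stopping time of the first-best problem is not $0$): (1) for each $t$, the optimal rent $R^*_t(x)$ is increasing and the optimal effort $A^*_t(x)$ is decreasing with respect to $x$; (2) for each $t$, the function $x\mapsto H_t(x)$ is decreasing.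
   Context: First-best problem: maximize $\mathbb{E}[\int_0^\tau e^{-\delta s}(\varphi(A_s)-R_s)ds-e^{-\delta\tau}\xi]$ over quadruplets $(R,\tau,\xi,A)$ with $R,A\ge0$ progressively measurable with respect to the Brownian filtration $\mathbb{F}$, $\tau$ an $\mathbb{F}$-stopping time, $\xi\ge0$ $\mathcal{F}_\tau$-measurable (with suitable integrability), subject to the reservation constraint $\mathbb{E}[\int_0^\tau e^{-\lambda s}(U(R_s)-h(A_s))ds+e^{-\lambda\tau}U(\xi)]\ge x$, where $x>0$. Standing assumptions: $\varphi:[0,\infty)\to[0,\infty)$ is $C^2$, strictly concave, bounded, increasing, $\varphi(0)=0$, $\varphi'(0)>0$; $U:[0,\infty)\to[0,\infty)$ is $C^2$, strictly concave, increasing, $U(0)=0$, $U'(\infty)=0$, $U'(0)=\infty$; $h:[0,\infty)\to[0,\infty)$ is $C^2$, strictly convex, increasing, $h(0)=0$, $h'(0)>0$; $\lambda\ge\delta>0$. The notation $(h'/\varphi')^{-1}(y)\vee0$ means the inverse of $h'/\varphi'$ at $y$ when defined and nonnegative, and $0$ otherwise. *)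

From HB Require Import structures.
From mathcomp Require Import all_boot all_order all_algebra.
From mathcomp Require Import all_classical all_reals all_analysis.
Set Implicit Arguments. Unset Strict Implicit. Unset Printing Implicit Defensive.
Import Order.TTheory GRing.Theory Num.Theory.
Import numFieldNormedType.Exports.
Local Open Scope classical_set_scope.
Local Open Scope ring_scope.

Section FirstBest.
Variable R : realType.

Definition strictly_concave_on_nonneg (f : R -> R) : Prop :=
  forall x y t, 0 <= x -> 0 <= y -> x != y -> 0 < t < 1 ->
    t * f x + (1 - t) * f y < f (t * x + (1 - t) * y).

Definition strictly_convex_on_nonneg (f : R -> R) : Prop :=
  forall x y t, 0 <= x -> 0 <= y -> x != y -> 0 < t < 1 ->
    f (t * x + (1 - t) * y) < t * f x + (1 - t) * f y.

Definition increasing_on_nonneg (f : R -> R) : Prop :=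
  forall x y, 0 <= x -> x <= y -> f x <= f y.

(* C^2 on [0,+oo[ : f is the restriction of a C^2 function on R
   (equivalent, by the extension theorem for half-lines). *)
Definition C2 (f : R -> R) : Prop :=
  (forall x, derivable f x 1) /\ (forall x, derivable (derive1 f) x 1) /\
  continuous (derive1n 2 f).

Definition phi_assumptions (phi : R -> R) : Prop :=
  (C2 phi /\ strictly_concave_on_nonneg phi /\
      (exists M, forall x, 0 <= x -> phi x <= M) /\
      increasing_on_nonneg phi /\
      (forall x, 0 <= x -> 0 <= phi x) /\
      phi 0 = 0 /\ 0 < (derive1 phi) 0).

Definition h_assumptions (h : R -> R) : Prop :=
  (C2 h /\ strictly_convex_on_nonneg h /\ increasing_on_nonneg h /\
      (forall x, 0 <= x -> 0 <= h x) /\ h 0 = 0 /\ 0 < (derive1 h) 0).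

Definition U_assumptions (U : R -> R) : Prop :=
  ((forall x, 0 < x -> derivable U x 1 /\ derivable (derive1 U) x 1
                        /\ {for x, continuous (derive1n 2 U)}) /\
      (U x @[x --> 0^'+] --> U 0) /\
      strictly_concave_on_nonneg U /\
      increasing_on_nonneg U /\
      (forall x, 0 <= x -> 0 <= U x) /\
      U 0 = 0 /\
      (((derive1 U) x @[x --> 0^'+] --> +oo) /\ ((derive1 U) x @[x --> +oo] --> 0))).

Definition Uprime_inv (U : R -> R) (y : R) : R :=
  xget 0 [set r | 0 < r /\ (derive1 U) r = y].

(* (h'/phi')^{-1}(y) \/ 0 : the point a >= 0 with h'(a)/phi'(a) = y when
   it exists, and 0 otherwise. *)
Definition hphi_inv0 (h phi : R -> R) (y : R) : R :=
  xget 0 [set a | 0 <= a /\ (derive1 h) a / (derive1 phi) a = y].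

Definition marg (lam delta l s : R) : R := expR ((lam - delta) * s) / l.

Definition Gintegrand (U h phi : R -> R) (lam delta l s : R) : R :=
  expR (- lam * s) *
    (U (Uprime_inv U (marg lam delta l s))
     - h (hphi_inv0 h phi (marg lam delta l s))).

Definition Gfun (U h phi : R -> R) (lam delta l : R) : \bar R :=
  \int[@lebesgue_measure R]_(s in `[(0:R), +oo[%classic)
     (Gintegrand U h phi lam delta l s)%:E.

Definition Rstar (U : R -> R) (lam delta l t : R) : R :=
  Uprime_inv U (marg lam delta l t).

Definition Astar (h phi : R -> R) (lam delta l t : R) : R :=
  hphi_inv0 h phi (marg lam delta l t).

Definition Hfun (U h phi : R -> R) (lam delta l t : R) : R :=
  phi (Astar h phi lam delta l t) - Rstar U lam delta l t.

End FirstBest.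

From HB Require Import structures.
From mathcomp Require Import all_boot all_order all_algebra.
From mathcomp Require Import all_classical all_reals all_analysis.
From mathcomp Require Import lra ring.
Import Order.TTheory GRing.Theory Num.Theory.
Import numFieldNormedType.Exports.
Local Open Scope classical_set_scope.
Local Open Scope ring_scope.

(* The shadow price [marg lam delta l t] decreases in the multiplier [l]. Since
   [(U')^{-1}] is decreasing and [(h'/phi')^{-1} \/ 0] nondecreasing (concavity
   of [U], [phi] and convexity of [h]), the rent [R^*] increases and the effort
   [A^*] decreases with [l], so the integrand of [G] and hence [G] itself are
   nondecreasing in [l]. Thus [G l1 < G l2] forces [l1 < l2], and the
   monotonicity of [R^*], [A^*] and [H = phi A^* - R^*] in [x] follows. *)

Section ConcaveDerivative.
Context {R : realType}.
Implicit Types (f : R -> R) (a b x y : R).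

Lemma chord_le_tangent {f x y} :
  (forall t, 0 < t < 1 -> f x + t * (f y - f x) <= f (x + t * (y - x))) ->
  derivable f x 1 -> f y - f x <= derive1 f x * (y - x).
Proof.
move=> chord /derivable1_diffP dfx.
have -> : derive1 f x * (y - x) = 'D_(y - x) f x.
  rewrite derive1E !deriveE // -[in RHS](mulr1 (y - x)).
  by rewrite -[(y - x) * 1]/((y - x) *: 1) linearZ mulrC.
have Dcvg : (fun t => t^-1 *: ((f \o shift x) (t *: (y - x)) - f x)) @ 0^'+
    --> 'D_(y - x) f x.
  move=> A /(@diff_derivable _ _ _ f x (y - x) dfx) /nbhs_ballP[e e0 De].
  by exists e => // t te t0; apply: De; rewrite // gt_eqF.
rewrite -(cvg_lim _ Dcvg) //; apply: limr_ge; first by apply/cvg_ex; exists ('D_(y - x) f x).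
near=> t.
have t01 : 0 < t < 1.
  by apply/andP; split; near: t; [exact: nbhs_right_gt | exact: nbhs_right_lt].
have := chord t t01; rewrite /= /shift /= [t *: _]/(t * _) (addrC (t * _)).
by have /andP[t0 _] := t01; rewrite [_ *: _]/(_ * _) ler_pdivlMl //; lra.
Unshelve. all: by end_near.
Qed.

Lemma strictly_concave_chord {f x y} : strictly_concave_on_nonneg f ->
  0 <= x -> 0 <= y ->
  forall t, 0 < t < 1 -> f x + t * (f y - f x) <= f (x + t * (y - x)).
Proof.
move=> fc x0 y0 t t01.
have [->|yx] := eqVneq y x; first by rewrite !subrr !mulr0 !addr0.
have -> : f x + t * (f y - f x) = t * f y + (1 - t) * f x by ring.
have -> : x + t * (y - x) = t * y + (1 - t) * x by ring.
exact/ltW/fc.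
Qed.

Lemma strictly_concave_tangent {f x y} : strictly_concave_on_nonneg f ->
  0 <= x -> 0 <= y -> derivable f x 1 -> f y - f x <= derive1 f x * (y - x).
Proof. by move=> fc x0 y0; apply/chord_le_tangent/strictly_concave_chord. Qed.

Lemma strictly_concave_derive1_le {f a b} : strictly_concave_on_nonneg f ->
  0 <= a -> a <= b -> derivable f a 1 -> derivable f b 1 ->
  derive1 f b <= derive1 f a.
Proof.
move=> fc a0 ab da db; have b0 := le_trans a0 ab.
have tab := strictly_concave_tangent fc a0 b0 da.
have tba := strictly_concave_tangent fc b0 a0 db.
have [->|ltab] := eqVneq a b; first exact: lexx.
have : 0 < b - a by rewrite subr_gt0 lt_neqAle ltab.
nra.
Qed.

Lemma strictly_convex_oppr {f} :
  strictly_convex_on_nonneg f -> strictly_concave_on_nonneg (- f).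
Proof.
move=> fc x y t x0 y0 xy t01; have := fc x y t x0 y0 xy t01.
by rewrite opprfctE; lra.
Qed.

Lemma strictly_convex_derive1_le {f a b} : strictly_convex_on_nonneg f ->
  0 <= a -> a <= b -> derivable f a 1 -> derivable f b 1 ->
  derive1 f a <= derive1 f b.
Proof.
move=> fc a0 ab da db.
have := strictly_concave_derive1_le (strictly_convex_oppr fc) a0 ab
  (derivableN da) (derivableN db).
by rewrite !derive1N // lerN2.
Qed.

(* If [f'(a) <= 0], the tangent bounds force [f (a + 2) = f a >= f (a + 1)],
   against strict concavity at the midpoint [a + 1]. *)
Lemma strictly_concave_increasing_derive1_gt0 {f a} :
  strictly_concave_on_nonneg f -> increasing_on_nonneg f ->
  0 <= a -> derivable f a 1 -> 0 < derive1 f a.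
Proof.
move=> fc finc a0 da; rewrite ltNge; apply/negP => fa_le0.
have a1 : 0 <= a + 1 by lra.
have a2 : 0 <= a + 2 by lra.
have t1 := strictly_concave_tangent fc a0 a1 da.
have t2 := strictly_concave_tangent fc a0 a2 da.
have := finc a (a + 2) a0 ltac:(lra).
have := fc a (a + 2) (1 / 2) a0 a2 ltac:(apply/eqP; lra) ltac:(apply/andP; lra).
rewrite (_ : 1 / 2 * a + (1 - 1 / 2) * (a + 2) = a + 1); last by field.
nra.
Qed.

End ConcaveDerivative.

Section IntegralMonotone.
Context {R : realType}.

(* No measurability is needed: the integral is the difference of two suprema
   over simple functions below the positive and negative parts. *)
Lemma le_integral_pointwise (D : set R) (f g : R -> R) :
  (forall x, D x -> f x <= g x) ->
  (\int[@lebesgue_measure R]_(x in D) (f x)%:E <=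
   \int[@lebesgue_measure R]_(x in D) (g x)%:E)%E.
Proof.
move=> fg; rewrite /integral /=.
have fg_D x : ((fun x => (f x)%:E) \_ D x <= (fun x => (g x)%:E) \_ D x)%E.
  by rewrite /patch; case: ifPn => // /set_mem Dx; rewrite lee_fin fg.
apply: leeB; apply: le_ereal_sup => _ [s s_le <-]; exists s => //= x.
  by apply: le_trans (s_le x) _; rewrite !funeposE; exact: le_max2.
apply: le_trans (s_le x) _; rewrite !funenegE; apply: le_max2 => //.
by rewrite leeN2.
Qed.

End IntegralMonotone.

Section Preimages.
Context {R : realType}.
Implicit Types (g : R -> R) (y : R).

Lemma nonneg_preimage_le g y1 y2 :
  (forall a b, 0 <= a -> a <= b -> g a <= g b) ->
  (forall a, 0 <= a -> {for a, continuous g}) ->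
  (forall y, exists2 b, 0 <= b & y <= g b) ->
  y1 <= y2 ->
  xget 0 [set a | 0 <= a /\ g a = y1] <= xget 0 [set a | 0 <= a /\ g a = y2].
Proof.
move=> g_nd g_cont g_unbnd y12.
have [->|y1_neq] := eqVneq y1 y2; first exact: lexx.
have y1_lt : y1 < y2 by rewrite lt_neqAle y1_neq.
case: xgetP => [a _ [a0 ga]|_]; last by case: xgetP => [? _ []|].
have [b b0 gb] := g_unbnd y2.
have ab : a <= b.
  by rewrite leNgt; apply/negP => /ltW /(g_nd _ _ b0); rewrite ga; lra.
have cg : {within `[a, b], continuous g}.
  apply: continuous_in_subspaceT => x; rewrite inE /= in_itv /= => /andP[ax _].
  exact/g_cont/(le_trans a0 ax).
have [|c] := @IVT _ g a b y2 ab cg.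
  by rewrite ga (min_idPl _) ?(max_idPr _); lra.
rewrite in_itv /= => /andP[ac _] gc.
have [c0 gc0] := @xgetPex _ 0 [set a | 0 <= a /\ g a = y2]
  (ex_intro _ c (conj (le_trans a0 ac) gc)).
rewrite leNgt; apply/negP => /ltW /(g_nd _ _ c0); rewrite ga gc0; lra.
Qed.

Section PositivePreimage.
Context {g : R -> R}.
Hypothesis g_ni : forall a b, 0 < a -> a <= b -> g b <= g a.
Hypothesis g_cont : forall a, 0 < a -> {for a, continuous g}.
Hypothesis g_at0 : g x @[x --> 0^'+] --> +oo.
Hypothesis g_atoo : g x @[x --> +oo] --> 0.

Lemma pos_preimage_exists {y} : 0 < y -> exists2 r, 0 < r & g r = y.
Proof.
move=> y0.
have /filter_ex[a [a0 ga]] : \forall x \near 0^'+, 0 < x /\ y < g x.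
  by near=> x; split; near: x; [exact: nbhs_right_gt | exact: (cvgryPgt _).1 g_at0 y].
have /filter_ex[b [b0 gb]] : \forall x \near +oo, 0 < x /\ g x < y.
  near=> x; split; near: x; last exact: cvgr_lt _ g_atoo y y0.
  by apply: nbhs_pinfty_gt; rewrite num_real.
have ab : a <= b.
  by rewrite leNgt; apply/negP => /ltW /(g_ni _ _ b0); lra.
have cg : {within `[a, b], continuous g}.
  apply: continuous_in_subspaceT => x; rewrite inE /= in_itv /= => /andP[ax _].
  exact/g_cont/(lt_le_trans a0 ax).
have [|c] := @IVT _ g a b y ab cg.
  by rewrite (min_idPr _) ?(max_idPl _); lra.
by rewrite in_itv /= => /andP[ac _] gc; exists c => //; exact: lt_le_trans ac.
Unshelve. all: by end_near.
Qed.

Lemma pos_preimage_spec {y} : 0 < y ->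
  0 < xget 0 [set r | 0 < r /\ g r = y] /\ g (xget 0 [set r | 0 < r /\ g r = y]) = y.
Proof.
move=> /pos_preimage_exists[r r0 gr].
exact: (@xgetPex _ 0 [set r | 0 < r /\ g r = y]) (ex_intro _ r (conj r0 gr)).
Qed.

Lemma pos_preimage_lt y1 y2 : 0 < y1 -> y1 < y2 ->
  xget 0 [set r | 0 < r /\ g r = y2] < xget 0 [set r | 0 < r /\ g r = y1].
Proof.
move=> y10 y12.
have [r10 gr1] := pos_preimage_spec y10.
have [_ gr2] := pos_preimage_spec (lt_trans y10 y12).
by rewrite ltNge; apply/negP => /(g_ni _ _ r10); rewrite gr1 gr2; lra.
Qed.

End PositivePreimage.
End Preimages.

Lemma hphi_inv0_ge0 {R : realType} (h phi : R -> R) y : 0 <= hphi_inv0 h phi y.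
Proof. by rewrite /hphi_inv0; case: xgetP => [? _ []|]. Qed.

Section Marg.
Context {R : realType} {lam delta : R}.

Lemma marg_gt0 {l} s : 0 < l -> 0 < marg lam delta l s.
Proof. by move=> l0; rewrite divr_gt0 ?expR_gt0. Qed.

Lemma marg_le {l l'} s : 0 < l -> l <= l' -> marg lam delta l' s <= marg lam delta l s.
Proof.
move=> l0 ll'; rewrite ler_pM2l ?expR_gt0 // lef_pV2 ?posrE //.
exact: lt_le_trans ll'.
Qed.

Lemma marg_lt {l l'} s : 0 < l -> l < l' -> marg lam delta l' s < marg lam delta l s.
Proof.
move=> l0 ll'; rewrite ltr_pM2l ?expR_gt0 // ltf_pV2 ?posrE //.
exact: lt_trans ll'.
Qed.

End Marg.

Section Effort.
Context {R : realType} {h phi : R -> R}.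
Hypotheses (hphi : phi_assumptions phi) (hh : h_assumptions h).

Let phi_derivable x : derivable phi x 1. Proof. by case: hphi => [[]]. Qed.
Let phi'_derivable x : derivable (derive1 phi) x 1. Proof. by case: hphi => [[_ []]]. Qed.
Let h_derivable x : derivable h x 1. Proof. by case: hh => [[]]. Qed.
Let h'_derivable x : derivable (derive1 h) x 1. Proof. by case: hh => [[_ []]]. Qed.

Lemma derive1_phi_gt0 {a} : 0 <= a -> 0 < derive1 phi a.
Proof.
case: hphi => _ [phi_sc [_ [phi_inc _]]] a0.
exact: strictly_concave_increasing_derive1_gt0 phi_sc phi_inc a0 (phi_derivable a).
Qed.

Lemma derive1_h_le {a b} : 0 <= a -> a <= b -> derive1 h a <= derive1 h b.
Proof.
case: hh => _ [h_sc _] a0 ab.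
exact: strictly_convex_derive1_le h_sc a0 ab (h_derivable a) (h_derivable b).
Qed.

Lemma derive1_h_gt0 {a} : 0 <= a -> 0 < derive1 h a.
Proof.
case: hh => _ [_ [_ [_ [_ h'0]]]] a0.
exact: lt_le_trans h'0 (derive1_h_le (lexx 0) a0).
Qed.

Lemma derive1_ratio_le {a b} : 0 <= a -> a <= b ->
  derive1 h a / derive1 phi a <= derive1 h b / derive1 phi b.
Proof.
move=> a0 ab; have b0 := le_trans a0 ab.
have phi'a := derive1_phi_gt0 a0; have phi'b := derive1_phi_gt0 b0.
have h'a := derive1_h_gt0 a0; have h'ab := derive1_h_le a0 ab.
have phi'ab : derive1 phi b <= derive1 phi a.
  case: hphi => _ [phi_sc _].
  exact: strictly_concave_derive1_le phi_sc a0 ab (phi_derivable a) (phi_derivable b).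
by rewrite ler_pdivlMr // mulrAC ler_pdivrMr //; nra.
Qed.

Lemma derive1_ratio_continuous a : 0 <= a ->
  {for a, continuous (fun x => derive1 h x / derive1 phi x)}.
Proof.
move=> a0; apply: cvgM.
  exact/differentiable_continuous/derivable1_diffP/h'_derivable.
apply: cvgV; first by rewrite gt_eqF // derive1_phi_gt0.
exact/differentiable_continuous/derivable1_diffP/phi'_derivable.
Qed.

(* A bounded concave [phi] has [b * phi'(b) <= phi b - phi 0 <= M], while
   [h'(b) >= h'(0) > 0]: the ratio grows at least linearly. *)
Lemma derive1_ratio_unbounded y :
  exists2 b, 0 <= b & y <= derive1 h b / derive1 phi b.
Proof.
case: hphi => _ [phi_sc [[M phi_le] [_ [_ [phi0 _]]]]].
have phi'_le b : 0 < b -> b * derive1 phi b <= M.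
  move=> b0.
  have := strictly_concave_tangent phi_sc (ltW b0) (lexx 0) (phi_derivable b).
  by have := phi_le b (ltW b0); rewrite phi0; lra.
have M0 : 0 < M.
  by have := phi'_le 1 ltr01; have := derive1_phi_gt0 ler01; lra.
have h'0 := derive1_h_gt0 (lexx 0).
pose b := `|y| * M / derive1 h 0 + 1.
have b0 : 0 < b.
  have := divr_ge0 (mulr_ge0 (normr_ge0 y) (ltW M0)) (ltW h'0).
  rewrite /b; lra.
have qb : derive1 h 0 * b = `|y| * M + derive1 h 0 by rewrite /b; field; rewrite gt_eqF.
exists b; first exact: ltW.
have phi'b := derive1_phi_gt0 (ltW b0).
have h'b := derive1_h_le (lexx 0) (ltW b0).
have yphi'b : `|y| * derive1 phi b < derive1 h 0.
  rewrite -(ltr_pM2r b0) qb -mulrA ltr_pwDr // ler_wpM2l // mulrC; exact: phi'_le.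
have := ler_norm y; rewrite ler_pdivlMr //; nra.
Qed.

Lemma hphi_inv0_le y1 y2 : y1 <= y2 -> hphi_inv0 h phi y1 <= hphi_inv0 h phi y2.
Proof.
apply: (@nonneg_preimage_le _ (fun a => derive1 h a / derive1 phi a)).
- by move=> a b; exact: derive1_ratio_le.
- exact: derive1_ratio_continuous.
- exact: derive1_ratio_unbounded.
Qed.

End Effort.

Section Rent.
Context {R : realType} {U : R -> R} (hU : U_assumptions U).

Lemma derive1_U_le a b : 0 < a -> a <= b -> derive1 U b <= derive1 U a.
Proof.
case: hU => U_C2 [_ [U_sc _]] a0 ab.
have [da _] := U_C2 a a0; have [db _] := U_C2 b (lt_le_trans a0 ab).
exact: strictly_concave_derive1_le U_sc (ltW a0) ab da db.
Qed.

Lemma derive1_U_continuous a : 0 < a -> {for a, continuous (derive1 U)}.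
Proof.
case: hU => U_C2 _ a0; have [_ [dU' _]] := U_C2 a a0.
exact/differentiable_continuous/derivable1_diffP.
Qed.

Lemma Uprime_inv_spec y : 0 < y ->
  0 < Uprime_inv U y /\ derive1 U (Uprime_inv U y) = y.
Proof.
case: hU => _ [_ [_ [_ [_ [_ [U'0 U'oo]]]]]] y0.
exact: (pos_preimage_spec derive1_U_le derive1_U_continuous U'0 U'oo y0).
Qed.

Lemma Uprime_inv_lt y1 y2 : 0 < y1 -> y1 < y2 -> Uprime_inv U y2 < Uprime_inv U y1.
Proof.
case: hU => _ [_ [_ [_ [_ [_ [U'0 U'oo]]]]]].
exact: (pos_preimage_lt derive1_U_le derive1_U_continuous U'0 U'oo).
Qed.

End Rent.

Section FirstBest.
Context {R : realType} {U h phi : R -> R} {lam delta : R}.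
Hypotheses (hphi : phi_assumptions phi) (hh : h_assumptions h) (hU : U_assumptions U).

Lemma Rstar_lt {l l'} t : 0 < l -> l < l' ->
  Rstar U lam delta l t < Rstar U lam delta l' t.
Proof.
move=> l0 ll'; apply: (Uprime_inv_lt hU); last exact: marg_lt.
exact: marg_gt0 (lt_trans l0 ll').
Qed.

Lemma Rstar_le {l l'} t : 0 < l -> l <= l' ->
  Rstar U lam delta l t <= Rstar U lam delta l' t.
Proof.
move=> l0; rewrite le_eqVlt => /orP[/eqP-> // | ll'].
exact/ltW/Rstar_lt.
Qed.

Lemma Astar_le {l l'} t : 0 < l -> l <= l' ->
  Astar h phi lam delta l' t <= Astar h phi lam delta l t.
Proof. by move=> l0 ll'; apply: (hphi_inv0_le hphi hh); exact: marg_le. Qed.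

Lemma Hfun_lt {l l'} t : 0 < l -> l < l' ->
  Hfun U h phi lam delta l' t < Hfun U h phi lam delta l t.
Proof.
move=> l0 ll'; case: hphi => _ [_ [_ [phi_inc _]]].
have := phi_inc _ _ (hphi_inv0_ge0 _ _ _) (Astar_le t l0 (ltW ll')).
have := Rstar_lt t l0 ll'.
rewrite /Hfun; lra.
Qed.

Lemma Gfun_le {l l'} : 0 < l -> l <= l' ->
  (Gfun U h phi lam delta l <= Gfun U h phi lam delta l')%E.
Proof.
case: hU => _ [_ [_ [U_inc _]]]; case: hh => _ [_ [h_inc _]] l0 ll'.
apply: le_integral_pointwise => s _; rewrite ler_pM2l ?expR_gt0 //.
have [Rl0 _] := Uprime_inv_spec hU _ (@marg_gt0 _ lam delta _ s l0).
have := U_inc _ _ (ltW Rl0) (Rstar_le s l0 ll').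
have := h_inc _ _ (hphi_inv0_ge0 _ _ _) (Astar_le s l0 ll').
rewrite /Rstar /Astar; lra.
Qed.

End FirstBest.

Theorem proposition3p4 (R : realType) (U h phi : R -> R) (lam delta : R)
  (hphi : phi_assumptions phi) (hh : h_assumptions h) (hU : U_assumptions U)
  (hdelta : 0 < delta) (hlam : delta <= lam)
  (x1 x2 l1 l2 : R) (hx1 : 0 < x1) (hx12 : x1 < x2)
  (hl1 : 0 < l1) (hl2 : 0 < l2)
  (hG1 : Gfun U h phi lam delta l1 = x1%:E)
  (hG2 : Gfun U h phi lam delta l2 = x2%:E) :
  forall t : R, 0 <= t ->
    [/\ Rstar U lam delta l1 t < Rstar U lam delta l2 t,
        Astar h phi lam delta l2 t <= Astar h phi lam delta l1 t &
        Hfun U h phi lam delta l2 t < Hfun U h phi lam delta l1 t].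
Proof.
have l12 : l1 < l2.
  rewrite ltNge; apply/negP => l21.
  suff : (x2%:E <= x1%:E)%E by rewrite lee_fin; lra.
  by rewrite -hG1 -hG2; exact: Gfun_le.
move=> t _; split.
- exact: (Rstar_lt hU t hl1 l12).
- exact: (Astar_le hphi hh t hl1 (ltW l12)).
- exact: (Hfun_lt hphi hh hU t hl1 l12).
Qed.
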